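(* Let $p_0<0$, $\alpha\in(0,1)$, $\mathbb{S}:=\mathbb{R}/(2\pi\mathbb{Z})$, $\Omega:=\mathbb{S}\times(p_0,0)$. Let $C_1>1$ be a constant, independent of $L$, with the following property: for every integer $N\ge3$, every $L\ge1$ and all functions $u_1,u_2,u_3$ on $\overline\Omega$ with $\partial_q^nu_i\in C^\alpha(\overline\Omega)$ for $0\le n\le N$ and $\|\partial_q^n u_i\|_\alpha\le L^{n-1}(n-2)!$ for $2\le n\le N$, one has $\|\partial_q^n(u_1u_2u_3)\|_\alpha\le C_1\big(1+\sum_{i=1}^3\sum_{l=0}^1\|\partial_q^l u_i\|_\alpha\big)^6L^{n-1}(n-2)!$ for all $2\le n\le N$. Let $N\ge3$ and let $u$ be a function on $\overline\Omega$ with $\partial_q^n u\in C^\alpha(\overline\Omega)$ for all $0\le n\le N$ and $\inf_\Omega u>0$. If there exists a constant \[ L\ge \|\partial_q^2(1/u)\|_\alpha^2+C_1^2\Big(1+\sum_{l=0}^1\big(2\|\partial_q^l(1/u)\|_\alpha+\|\partial_q^{1+l}u\|_\alpha\big)\Big)^{12} \] such that $\|\partial_q^n u\|_\alpha\le L^{n-2}(n-3)!$ for all $3\le n\le N$, then \[ \|\partial_q^n(1/u)\|_\alpha\le L^{n-3/2}(n-2)!\qquad\text{for all } 2\le n\le N. \]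
   Context: $\|\cdot\|_\alpha$ denotes the norm of the Hölder space $C^\alpha(\overline\Omega)$, normalized so that $\|uv\|_\alpha\le\|u\|_\alpha\|v\|_\alpha$. $\partial_q$ denotes differentiation with respect to the first variable $q\in\mathbb{S}$. (Such a constant $C_1$ exists; in the paper it is the constant of the preceding product-estimate lemma.) *)

From Stdlib Require Import Reals Arith Factorial.
From Coquelicot Require Import Coquelicot.
Open Scope R_scope.

(* Functions on closure(Omega) = S x [p0,0], S = R/(2 pi Z), are represented as
   f : R -> R -> R (f q p), 2pi-periodic in q; only p in [p0,0] matters. *)
Definition in_strip (p0 p : R) : Prop := p0 <= p <= 0.

Definition qperiodic (p0 : R) (f : R -> R -> R) : Prop :=
  forall q p, in_strip p0 p -> f (q + 2 * PI) p = f q p.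

Definition dq (n : nat) (f : R -> R -> R) : R -> R -> R :=
  fun q p => Derive_n (fun t => f t p) n q.

Definition dist2 (q p q' p' : R) : R := sqrt ((q - q') ^ 2 + (p - p') ^ 2).

Definition in_holder (alpha p0 : R) (f : R -> R -> R) : Prop :=
  exists M : R,
    (forall q p, in_strip p0 p -> Rabs (f q p) <= M) /\
    (forall q p q' p', in_strip p0 p -> in_strip p0 p' -> (q, p) <> (q', p') ->
        Rabs (f q p - f q' p') <= M * Rpower (dist2 q p q' p') alpha).

Definition sup_norm (p0 : R) (f : R -> R -> R) : Rbar :=
  Lub_Rbar (fun r => exists q p, in_strip p0 p /\ r = Rabs (f q p)).

Definition holder_semi (alpha p0 : R) (f : R -> R -> R) : Rbar :=
  Lub_Rbar (fun r => exists q p q' p', in_strip p0 p /\ in_strip p0 p' /\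
      (q, p) <> (q', p') /\
      r = Rabs (f q p - f q' p') / Rpower (dist2 q p q' p') alpha).

(* ||f||_alpha = |f|_0 + [f]_alpha (submultiplicative) *)
Definition hnorm (alpha p0 : R) (f : R -> R -> R) : R :=
  real (Rbar_plus (sup_norm p0 f) (holder_semi alpha p0 f)).

Definition qCN_alpha (alpha p0 : R) (N : nat) (f : R -> R -> R) : Prop :=
  qperiodic p0 f /\
  (forall n, (n < N)%nat -> forall q p, in_strip p0 p ->
      ex_derive (fun t => dq n f t p) q) /\
  (forall n, (n <= N)%nat -> in_holder alpha p0 (dq n f)).

Definition inv_fun (f : R -> R -> R) : R -> R -> R := fun q p => / f q p.

Definition prod3 (f g h : R -> R -> R) : R -> R -> R :=
  fun q p => f q p * g q p * h q p.

(** Write [w = 1/u]; [u] stays bounded below on the closed strip by Hoelder continuity.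
    Differentiating [u w = 1] gives [∂_q w = - w w ∂_q u], hence
    [∂_q^(n+1) w = - ∂_q^n (w w ∂_q u)].  For [n >= 4] the product estimate, applied to
    [w, w, ∂_q u] with the same [L], bounds [‖∂_q^n w‖] by [K L^(n-2) (n-3)!], where
    [K = C1 (1 + S)^6] and [S] is the sum of norms in the assumption on [L]; the
    lower-order derivatives of [w] meet its hypotheses by strong induction, since
    [L^(k-3/2) <= L^(k-1)].  The assumption on [L] gives [K^2 <= L], i.e. [K <= sqrt L],
    which turns [L^(n-2)] into [L^(n-3/2)].  The case [n = 3] lies below the range of the
    product estimate and is bounded directly from the explicit formula for [∂_q^3 w]; the
    case [n = 2] is the [‖∂_q^2 w‖^2] term of the assumption on [L]. *)

From Stdlib Require Import Reals Arith Factorial Lra Lia Psatz.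
From Coquelicot Require Import Coquelicot.
Open Scope R_scope.
(* Coquelicot loads ssreflect, which switches bullets off. *)
Set Bullet Behavior "Strict Subproofs".

Definition fmul (f g : R -> R -> R) : R -> R -> R := fun q p => f q p * g q p.
Definition fadd (f g : R -> R -> R) : R -> R -> R := fun q p => f q p + g q p.
Definition fcst (k : R) : R -> R -> R := fun _ _ => k.

Lemma Rpower_gt0 x a : 0 < Rpower x a.
Proof. apply exp_pos. Qed.

Lemma in_strip_0 p0 : p0 <= 0 -> in_strip p0 0.
Proof. unfold in_strip; lra. Qed.

Section HolderSpace.
Variables (alpha p0 : R).

Lemma in_holder_ext f g : (forall q p, in_strip p0 p -> f q p = g q p) ->
  in_holder alpha p0 f -> in_holder alpha p0 g.
Proof.
  intros E [M [H1 H2]]. exists M; split.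
  - intros q p Hp. rewrite <- E by assumption. auto.
  - intros q p q' p' Hp Hp' D. rewrite <- !E by assumption. auto.
Qed.

Lemma in_holder_cst k : in_holder alpha p0 (fcst k).
Proof.
  exists (Rabs k). split.
  - intros; unfold fcst; lra.
  - intros. unfold fcst. rewrite Rminus_diag, Rabs_R0.
    apply Rmult_le_pos; [apply Rabs_pos | left; apply Rpower_gt0].
Qed.

Lemma in_holder_add f g : in_holder alpha p0 f -> in_holder alpha p0 g ->
  in_holder alpha p0 (fadd f g).
Proof.
  intros [M [H1 H2]] [K [K1 K2]]. exists (M + K). split.
  - intros q p Hp. unfold fadd. eapply Rle_trans; [apply Rabs_triang|].
    specialize (H1 q p Hp); specialize (K1 q p Hp); lra.
  - intros q p q' p' Hp Hp' D. unfold fadd.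
    replace (f q p + g q p - (f q' p' + g q' p'))
      with ((f q p - f q' p') + (g q p - g q' p')) by ring.
    eapply Rle_trans; [apply Rabs_triang|].
    specialize (H2 _ _ _ _ Hp Hp' D); specialize (K2 _ _ _ _ Hp Hp' D); lra.
Qed.

Lemma in_holder_inv f c : 0 < c -> (forall q p, in_strip p0 p -> c <= f q p) ->
  in_holder alpha p0 f -> in_holder alpha p0 (inv_fun f).
Proof.
  intros Hc Hf [M [H1 H2]].
  exists (Rmax (/ c) (M / (c * c))). split.
  - intros q p Hp. unfold inv_fun. specialize (Hf q p Hp).
    rewrite Rabs_inv, Rabs_pos_eq by lra. eapply Rle_trans; [|apply Rmax_l].
    apply Rinv_le_contravar; lra.
  - intros q p q' p' Hp Hp' D. unfold inv_fun.
    pose proof (Hf q p Hp) as A. pose proof (Hf q' p' Hp') as B.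
    replace (/ f q p - / f q' p') with ((f q' p' - f q p) / (f q p * f q' p')) by (field; lra).
    unfold Rdiv. rewrite Rabs_mult, Rabs_inv, (Rabs_pos_eq (f q p * f q' p')) by nra.
    rewrite <- Rabs_Ropp, Ropp_minus_distr.
    set (r := Rpower (dist2 q p q' p') alpha).
    assert (0 < r) by apply Rpower_gt0.
    specialize (H2 _ _ _ _ Hp Hp' D). fold r in H2.
    assert (/ (f q p * f q' p') <= / (c * c)) by (apply Rinv_le_contravar; nra).
    assert (0 <= / (f q p * f q' p')) by (left; apply Rinv_0_lt_compat; nra).
    assert (Rabs (f q p - f q' p') * / (f q p * f q' p') <= M * r * / (c * c))
      by (apply Rmult_le_compat; auto using Rabs_pos).
    assert (M / (c * c) <= Rmax (/ c) (M / (c * c))) by apply Rmax_r.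
    unfold Rdiv in *. nra.
Qed.

Hypothesis Hp0 : p0 <= 0.

Lemma in_holder_bound_ge0 (f : R -> R -> R) M :
  (forall q p, in_strip p0 p -> Rabs (f q p) <= M) -> 0 <= M.
Proof. intros H. specialize (H 0 0 (in_strip_0 p0 Hp0)). pose proof (Rabs_pos (f 0 0)). lra. Qed.

Lemma in_holder_mul f g : in_holder alpha p0 f -> in_holder alpha p0 g ->
  in_holder alpha p0 (fmul f g).
Proof.
  intros [M [H1 H2]] [K [K1 K2]].
  pose proof (in_holder_bound_ge0 f M H1) as HM.
  pose proof (in_holder_bound_ge0 g K K1) as HK.
  exists (2 * M * K + M * K). split.
  - intros q p Hp. unfold fmul. rewrite Rabs_mult.
    assert (Rabs (f q p) * Rabs (g q p) <= M * K)
      by (apply Rmult_le_compat; auto using Rabs_pos).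
    pose proof (Rmult_le_pos _ _ HM HK). lra.
  - intros q p q' p' Hp Hp' D. unfold fmul.
    replace (f q p * g q p - f q' p' * g q' p') with
      (f q p * (g q p - g q' p') + g q' p' * (f q p - f q' p')) by ring.
    eapply Rle_trans; [apply Rabs_triang|]. rewrite !Rabs_mult.
    set (r := Rpower (dist2 q p q' p') alpha).
    assert (0 < r) by apply Rpower_gt0.
    assert (Rabs (f q p) * Rabs (g q p - g q' p') <= M * (K * r))
      by (apply Rmult_le_compat; auto using Rabs_pos).
    assert (Rabs (g q' p') * Rabs (f q p - f q' p') <= K * (M * r))
      by (apply Rmult_le_compat; auto using Rabs_pos).
    assert (0 <= M * K * r) by (apply Rmult_le_pos; [apply Rmult_le_pos|]; lra).
    nra.
Qed.

End HolderSpace.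

Lemma Rpower_small a d : 0 < a -> 0 < d ->
  exists e, 0 < e /\ forall x, 0 < x <= e -> Rpower x a <= d.
Proof.
  intros Ha Hd. exists (Rpower d (/ a)). split; [apply Rpower_gt0|].
  intros x Hx. eapply Rle_trans; [apply Rle_Rpower_l; [lra|exact Hx]|].
  rewrite Rpower_mult, Rinv_l, Rpower_1 by lra. lra.
Qed.

Lemma in_holder_lower_bound_closure alpha p0 f c : p0 < 0 -> 0 < alpha ->
  in_holder alpha p0 f -> (forall q p, p0 < p < 0 -> c <= f q p) ->
  forall q p, in_strip p0 p -> c <= f q p.
Proof.
  intros Hp0 Ha [M [HM1 HM2]] Hc q p Hp.
  destruct (Rle_dec c (f q p)) as [|Hlt]; [assumption|exfalso].
  set (d := c - f q p).
  assert (Hd : 0 < d) by (unfold d; lra).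
  assert (HM : 0 <= M) by (specialize (HM1 q p Hp); pose proof (Rabs_pos (f q p)); lra).
  destruct (Rpower_small alpha (d / (M + 1)) Ha) as [e [He HE]].
  { apply Rdiv_lt_0_compat; lra. }
  set (eps := Rmin e (- p0 / 4)).
  assert (0 < eps) by (apply Rmin_glb_lt; lra).
  assert (eps <= e) by apply Rmin_l. assert (eps <= - p0 / 4) by apply Rmin_r.
  assert (exists p', p0 < p' < 0 /\ (p' - p) ^ 2 = eps ^ 2) as [p' [Hp' Hpp]].
  { unfold in_strip in Hp. destruct (Rle_dec p (p0 / 2)).
    - exists (p + eps). split; [lra|ring].
    - exists (p - eps). split; [lra|ring]. }
  assert (Hne : (q, p') <> (q, p)) by (intros E; injection E; intros; subst; nra).
  assert (Hdist : dist2 q p' q p = eps).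
  { unfold dist2. replace ((q - q) ^ 2 + (p' - p) ^ 2) with (eps ^ 2) by (rewrite <- Hpp; ring).
    apply sqrt_pow2. lra. }
  assert (Hs : in_strip p0 p') by (unfold in_strip; lra).
  specialize (HM2 _ _ _ _ Hs Hp Hne). rewrite Hdist in HM2.
  assert (M * Rpower eps alpha <= M * (d / (M + 1)))
    by (apply Rmult_le_compat_l; [|apply HE]; lra).
  assert (M * (d / (M + 1)) = d - d / (M + 1)) by (field; lra).
  assert (0 < d / (M + 1)) by (apply Rdiv_lt_0_compat; lra).
  assert (c <= f q p') by (apply Hc; lra).
  pose proof (Rle_abs (f q p' - f q p)). unfold d in *. lra.
Qed.

Section QDerivatives.
Variables (alpha p0 : R).

Lemma dq_ext f g : (forall q p, in_strip p0 p -> f q p = g q p) ->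
  forall n q p, in_strip p0 p -> dq n f q p = dq n g q p.
Proof. intros E n q p Hp. apply Derive_n_ext. auto. Qed.

Lemma dq_comp n f q p : dq n (dq 1 f) q p = dq (S n) f q p.
Proof.
  unfold dq. replace (S n) with (n + 1)%nat by lia. exact (Derive_n_comp (fun t => f t p) n 1 q).
Qed.

Lemma qCN_ext N f g : (forall q p, in_strip p0 p -> f q p = g q p) ->
  qCN_alpha alpha p0 N f -> qCN_alpha alpha p0 N g.
Proof.
  intros E [P [D H]]. split; [|split].
  - intros q p Hp. rewrite <- !E by assumption. auto.
  - intros n Hn q p Hp. eapply ex_derive_ext; [|apply (D n Hn q p Hp)].
    intros t. apply (dq_ext f g E n t p Hp).
  - intros n Hn. eapply in_holder_ext; [|apply (H n Hn)].
    intros q p Hp. apply (dq_ext f g E n q p Hp).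
Qed.

Lemma qCN_le N M f : (N <= M)%nat -> qCN_alpha alpha p0 M f -> qCN_alpha alpha p0 N f.
Proof.
  intros HNM [P [D H]]. split; [exact P|split].
  - intros n Hn. apply D; lia.
  - intros n Hn. apply H; lia.
Qed.

Lemma qCN_holder N f : qCN_alpha alpha p0 N f -> in_holder alpha p0 f.
Proof. intros [_ [_ H]]. exact (H 0%nat (Nat.le_0_l N)). Qed.

Lemma qCN_periodic N f : qCN_alpha alpha p0 N f -> qperiodic p0 f.
Proof. intros [P _]; exact P. Qed.

Lemma qCN_0 f : qperiodic p0 f -> in_holder alpha p0 f -> qCN_alpha alpha p0 0 f.
Proof.
  intros P H. split; [exact P|split]; [intros; lia|].
  intros n Hn. replace n with 0%nat by lia. exact H.
Qed.

Lemma qCN_succ_inv N f : qCN_alpha alpha p0 (S N) f ->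
  (forall q p, in_strip p0 p -> ex_derive (fun t => f t p) q) /\
  qCN_alpha alpha p0 N (dq 1 f).
Proof.
  intros [P [D H]]. split; [|split; [|split]].
  - intros q p Hp. apply (D 0%nat ltac:(lia) q p Hp).
  - intros q p Hp. change (Derive_n (fun t => f t p) 1 (q + 2 * PI) = Derive_n (fun t => f t p) 1 q).
    rewrite <- Derive_n_comp_trans. apply Derive_n_ext. intros t. apply P, Hp.
  - intros n Hn q p Hp. eapply ex_derive_ext; [|apply (D (S n) ltac:(lia) q p Hp)].
    intros t. symmetry. apply dq_comp.
  - intros n Hn. eapply in_holder_ext; [|apply (H (S n) ltac:(lia))].
    intros q p Hp. symmetry. apply dq_comp.
Qed.

Lemma qCN_succ_intro N f : qperiodic p0 f -> in_holder alpha p0 f ->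
  (forall q p, in_strip p0 p -> ex_derive (fun t => f t p) q) ->
  qCN_alpha alpha p0 N (dq 1 f) -> qCN_alpha alpha p0 (S N) f.
Proof.
  intros P H0 D0 [_ [D1 H1]]. split; [exact P|split].
  - intros [|n] Hn q p Hp; [apply D0, Hp|].
    eapply ex_derive_ext; [|apply (D1 n ltac:(lia) q p Hp)].
    intros t. apply dq_comp.
  - intros [|n] Hn; [exact H0|].
    eapply in_holder_ext; [|apply (H1 n ltac:(lia))]. intros; apply dq_comp.
Qed.

Lemma qCN_cst N k : qCN_alpha alpha p0 N (fcst k).
Proof.
  revert k; induction N; intros k.
  - apply qCN_0; [intros q p _; reflexivity|apply in_holder_cst].
  - apply qCN_succ_intro; [intros q p _; reflexivity|apply in_holder_cst| |].
    + intros q p _. unfold fcst. apply ex_derive_const.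
    + eapply qCN_ext; [|apply (IHN 0)]. intros q p _. symmetry. apply (Derive_const k).
Qed.

Lemma qCN_add N f g : qCN_alpha alpha p0 N f -> qCN_alpha alpha p0 N g ->
  qCN_alpha alpha p0 N (fadd f g).
Proof.
  revert f g; induction N; intros f g Hf Hg;
    (assert (P : qperiodic p0 (fadd f g));
     [intros q p Hp; unfold fadd; rewrite (qCN_periodic _ _ Hf), (qCN_periodic _ _ Hg) by exact Hp;
      reflexivity|]);
    (assert (H0 : in_holder alpha p0 (fadd f g));
     [apply in_holder_add; eapply qCN_holder; eassumption|]).
  - apply qCN_0; assumption.
  - destruct (qCN_succ_inv _ _ Hf) as [Df Hf1], (qCN_succ_inv _ _ Hg) as [Dg Hg1].
    apply qCN_succ_intro; [exact P|exact H0| |].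
    + intros q p Hp. apply (ex_derive_plus (fun t => f t p) (fun t => g t p)); auto.
    + eapply qCN_ext; [|apply (IHN _ _ Hf1 Hg1)].
      intros q p Hp. symmetry. apply (Derive_plus (fun t => f t p) (fun t => g t p)); auto.
Qed.

Hypothesis Hp0 : p0 <= 0.

Lemma qCN_mul N f g : qCN_alpha alpha p0 N f -> qCN_alpha alpha p0 N g ->
  qCN_alpha alpha p0 N (fmul f g).
Proof.
  revert f g; induction N; intros f g Hf Hg;
    (assert (P : qperiodic p0 (fmul f g));
     [intros q p Hp; unfold fmul; rewrite (qCN_periodic _ _ Hf), (qCN_periodic _ _ Hg) by exact Hp;
      reflexivity|]);
    (assert (H0 : in_holder alpha p0 (fmul f g));
     [apply in_holder_mul; [exact Hp0|..]; eapply qCN_holder; eassumption|]).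
  - apply qCN_0; assumption.
  - destruct (qCN_succ_inv _ _ Hf) as [Df Hf1], (qCN_succ_inv _ _ Hg) as [Dg Hg1].
    apply qCN_succ_intro; [exact P|exact H0| |].
    + intros q p Hp. apply (ex_derive_mult (fun t => f t p) (fun t => g t p)); auto.
    + eapply qCN_ext; [|apply (qCN_add _ _ _ (IHN _ _ Hf1 (qCN_le N _ _ (Nat.le_succ_diag_r N) Hg))
                                             (IHN _ _ (qCN_le N _ _ (Nat.le_succ_diag_r N) Hf) Hg1))].
      intros q p Hp. symmetry. apply (Derive_mult (fun t => f t p) (fun t => g t p)); auto.
Qed.

End QDerivatives.

Lemma dq1_inv_fun (u : R -> R -> R) q p : u q p <> 0 -> ex_derive (fun t => u t p) q ->
  dq 1 (inv_fun u) q p = - prod3 (inv_fun u) (inv_fun u) (dq 1 u) q p.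
Proof.
  intros Hu Hd. unfold dq, prod3, inv_fun. simpl.
  rewrite (Derive_inv (fun t => u t p)) by assumption. field. exact Hu.
Qed.

Lemma qCN_inv alpha p0 N f c : p0 <= 0 -> 0 < c -> (forall q p, in_strip p0 p -> c <= f q p) ->
  qCN_alpha alpha p0 N f -> qCN_alpha alpha p0 N (inv_fun f).
Proof.
  intros Hp0 Hc Hpos. induction N; intros Hf;
    (assert (P : qperiodic p0 (inv_fun f));
     [intros q p Hp; unfold inv_fun; rewrite (qCN_periodic _ _ _ _ Hf) by exact Hp; reflexivity|]);
    (assert (H0 : in_holder alpha p0 (inv_fun f));
     [eapply in_holder_inv; [exact Hc|exact Hpos|eapply qCN_holder; exact Hf]|]).
  - apply qCN_0; assumption.
  - destruct (qCN_succ_inv _ _ _ _ Hf) as [Df Hf1].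
    assert (Hf0 : forall q p, in_strip p0 p -> f q p <> 0)
      by (intros q p Hp; specialize (Hpos q p Hp); lra).
    assert (Hw := IHN (qCN_le _ _ N _ _ (Nat.le_succ_diag_r N) Hf)).
    apply qCN_succ_intro; [exact P|exact H0| |].
    + intros q p Hp. apply (ex_derive_inv (fun t => f t p)); auto.
    + eapply qCN_ext;
        [|exact (qCN_mul _ _ Hp0 _ _ _ (qCN_mul _ _ Hp0 _ _ _ (qCN_cst _ _ _ (-1)) Hf1)
                                      (qCN_mul _ _ Hp0 _ _ _ Hw Hw))].
      intros q p Hp. rewrite dq1_inv_fun by auto. unfold fmul, fcst, prod3. ring.
Qed.

Lemma Lub_Rbar_bounded (E : R -> Prop) A x0 : E x0 -> 0 <= x0 -> (forall x, E x -> x <= A) ->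
  exists s, Lub_Rbar E = Finite s /\ 0 <= s /\ s <= A /\ forall x, E x -> x <= s.
Proof.
  intros H0 Hx0 HA. destruct (Lub_Rbar_correct E) as [ub lst].
  destruct (Lub_Rbar E) as [s| |] eqn:Es.
  - exists s. pose proof (ub x0 H0). specialize (lst (Finite A) HA). simpl in *.
    repeat split; [lra|exact lst|]. intros x Hx. exact (ub x Hx).
  - exfalso. exact (lst (Finite A) HA).
  - exfalso. exact (ub x0 H0).
Qed.

Lemma Lub_Rbar_ge0 (E : R -> Prop) x0 : E x0 -> 0 <= x0 -> Rbar_le 0 (Lub_Rbar E).
Proof.
  intros H0 Hx0. destruct (Lub_Rbar_correct E) as [ub _].
  specialize (ub x0 H0). destruct (Lub_Rbar E); simpl in *; auto; lra.
Qed.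

Definition sup_set p0 (f : R -> R -> R) : R -> Prop :=
  fun r => exists q p, in_strip p0 p /\ r = Rabs (f q p).

Definition holder_quot_set alpha p0 (f : R -> R -> R) : R -> Prop :=
  fun r => exists q p q' p', in_strip p0 p /\ in_strip p0 p' /\ (q, p) <> (q', p') /\
    r = Rabs (f q p - f q' p') / Rpower (dist2 q p q' p') alpha.

Section HolderNorm.
Variables (alpha p0 : R).

Lemma hnorm_eq_abs f g : (forall q p, in_strip p0 p -> Rabs (f q p) = Rabs (g q p)) ->
  (forall q p q' p', in_strip p0 p -> in_strip p0 p' ->
     Rabs (f q p - f q' p') = Rabs (g q p - g q' p')) ->
  hnorm alpha p0 f = hnorm alpha p0 g.
Proof.
  intros E1 E2. unfold hnorm, sup_norm, holder_semi. do 2 f_equal; apply Lub_Rbar_eqset.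
  - intros x; split; intros [q [p [Hp ->]]]; exists q, p; split; auto. apply eq_sym, E1, Hp.
  - intros x; split; intros [q [p [q' [p' [Hp [Hp' [D ->]]]]]]];
      exists q, p, q', p'; do 3 (split; [assumption|]); rewrite E2 by assumption; reflexivity.
Qed.

Lemma hnorm_ext f g : (forall q p, in_strip p0 p -> f q p = g q p) ->
  hnorm alpha p0 f = hnorm alpha p0 g.
Proof. intros E. apply hnorm_eq_abs; intros; rewrite !E by assumption; reflexivity. Qed.

Lemma hnorm_opp f : hnorm alpha p0 (fun q p => - f q p) = hnorm alpha p0 f.
Proof.
  apply hnorm_eq_abs; intros.
  - apply Rabs_Ropp.
  - rewrite <- Rabs_Ropp. f_equal. ring.
Qed.

Hypothesis Hp0 : p0 <= 0.

Lemma sup_set_0 f : sup_set p0 f (Rabs (f 0 0)).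
Proof. exists 0, 0. split; [apply in_strip_0, Hp0|reflexivity]. Qed.

Lemma holder_quot_set_0 f :
  holder_quot_set alpha p0 f (Rabs (f 0 0 - f 1 0) / Rpower (dist2 0 0 1 0) alpha).
Proof.
  pose proof (in_strip_0 p0 Hp0).
  exists 0, 0, 1, 0. split; [assumption|split; [assumption|split; [|reflexivity]]].
  intros E. injection E. lra.
Qed.

Lemma holder_quot_ge0 x y : 0 <= Rabs x / Rpower y alpha.
Proof.
  unfold Rdiv. apply Rmult_le_pos; [apply Rabs_pos|]. left; apply Rinv_0_lt_compat, Rpower_gt0.
Qed.

Lemma hnorm_ge0 f : 0 <= hnorm alpha p0 f.
Proof.
  assert (A := Lub_Rbar_ge0 _ _ (sup_set_0 f) (Rabs_pos _)).
  assert (B := Lub_Rbar_ge0 _ _ (holder_quot_set_0 f) (holder_quot_ge0 _ _)).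
  unfold hnorm, sup_norm, holder_semi. fold (sup_set p0 f) (holder_quot_set alpha p0 f).
  destruct (Lub_Rbar (sup_set p0 f)), (Lub_Rbar (holder_quot_set alpha p0 f)); simpl in *; lra.
Qed.

Lemma hnorm_spec f A B :
  (forall q p, in_strip p0 p -> Rabs (f q p) <= A) ->
  (forall q p q' p', in_strip p0 p -> in_strip p0 p' -> (q, p) <> (q', p') ->
     Rabs (f q p - f q' p') <= B * Rpower (dist2 q p q' p') alpha) ->
  exists s h, hnorm alpha p0 f = s + h /\ 0 <= s <= A /\ 0 <= h <= B /\
   (forall q p, in_strip p0 p -> Rabs (f q p) <= s) /\
   (forall q p q' p', in_strip p0 p -> in_strip p0 p' -> (q, p) <> (q', p') ->
      Rabs (f q p - f q' p') <= h * Rpower (dist2 q p q' p') alpha).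
Proof.
  intros HA HB.
  destruct (Lub_Rbar_bounded (sup_set p0 f) A _ (sup_set_0 f) (Rabs_pos _))
    as [s [Es [s0 [sA sU]]]].
  { intros x [q [p [Hp ->]]]. auto. }
  destruct (Lub_Rbar_bounded (holder_quot_set alpha p0 f) B _ (holder_quot_set_0 f)
              (holder_quot_ge0 _ _)) as [h [Eh [h0 [hB hU]]]].
  { intros x [q [p [q' [p' [Hp [Hp' [D ->]]]]]]].
    apply Rle_div_l; [apply Rpower_gt0|auto]. }
  exists s, h. split; [|split; [|split; [|split]]]; try lra.
  - unfold hnorm, sup_norm, holder_semi. fold (sup_set p0 f) (holder_quot_set alpha p0 f).
    rewrite Es, Eh. reflexivity.
  - intros q p Hp. apply sU. exists q, p; auto.
  - intros q p q' p' Hp Hp' D. apply Rle_div_l; [apply Rpower_gt0|].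
    apply hU. exists q, p, q', p'; auto.
Qed.

Lemma hnorm_le f A B :
  (forall q p, in_strip p0 p -> Rabs (f q p) <= A) ->
  (forall q p q' p', in_strip p0 p -> in_strip p0 p' -> (q, p) <> (q', p') ->
     Rabs (f q p - f q' p') <= B * Rpower (dist2 q p q' p') alpha) ->
  hnorm alpha p0 f <= A + B.
Proof. intros HA HB. destruct (hnorm_spec f A B HA HB) as [s [h [-> [? [? _]]]]]. lra. Qed.

Lemma hnorm_spec_holder f : in_holder alpha p0 f ->
  exists s h, hnorm alpha p0 f = s + h /\ 0 <= s /\ 0 <= h /\
   (forall q p, in_strip p0 p -> Rabs (f q p) <= s) /\
   (forall q p q' p', in_strip p0 p -> in_strip p0 p' -> (q, p) <> (q', p') ->
      Rabs (f q p - f q' p') <= h * Rpower (dist2 q p q' p') alpha).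
Proof.
  intros [M [HA HB]]. destruct (hnorm_spec f M M HA HB) as [s [h [E [? [? ?]]]]].
  exists s, h. repeat split; tauto.
Qed.

Lemma hnorm_cst k : hnorm alpha p0 (fcst k) <= Rabs k.
Proof.
  rewrite <- (Rplus_0_r (Rabs k)). apply hnorm_le; intros; unfold fcst; [lra|].
  rewrite Rminus_diag, Rabs_R0. lra.
Qed.

Lemma hnorm_add f g : in_holder alpha p0 f -> in_holder alpha p0 g ->
  hnorm alpha p0 (fadd f g) <= hnorm alpha p0 f + hnorm alpha p0 g.
Proof.
  intros Hf Hg.
  destruct (hnorm_spec_holder f Hf) as [s1 [h1 [-> [_ [_ [S1 H1]]]]]].
  destruct (hnorm_spec_holder g Hg) as [s2 [h2 [-> [_ [_ [S2 H2]]]]]].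
  replace (s1 + h1 + (s2 + h2)) with ((s1 + s2) + (h1 + h2)) by ring.
  apply hnorm_le; unfold fadd.
  - intros q p Hp. eapply Rle_trans; [apply Rabs_triang|].
    specialize (S1 q p Hp); specialize (S2 q p Hp); lra.
  - intros q p q' p' Hp Hp' D.
    replace (f q p + g q p - (f q' p' + g q' p'))
      with ((f q p - f q' p') + (g q p - g q' p')) by ring.
    eapply Rle_trans; [apply Rabs_triang|].
    specialize (H1 _ _ _ _ Hp Hp' D); specialize (H2 _ _ _ _ Hp Hp' D); lra.
Qed.

Lemma hnorm_mul f g : in_holder alpha p0 f -> in_holder alpha p0 g ->
  hnorm alpha p0 (fmul f g) <= hnorm alpha p0 f * hnorm alpha p0 g.
Proof.
  intros Hf Hg.
  destruct (hnorm_spec_holder f Hf) as [s1 [h1 [-> [s10 [h10 [S1 H1]]]]]].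
  destruct (hnorm_spec_holder g Hg) as [s2 [h2 [-> [s20 [h20 [S2 H2]]]]]].
  apply Rle_trans with (s1 * s2 + (s1 * h2 + s2 * h1)).
  2: { assert (0 <= h1 * h2) by (apply Rmult_le_pos; auto). nra. }
  apply hnorm_le; unfold fmul.
  - intros q p Hp. rewrite Rabs_mult. apply Rmult_le_compat; auto using Rabs_pos.
  - intros q p q' p' Hp Hp' D.
    replace (f q p * g q p - f q' p' * g q' p') with
      (f q p * (g q p - g q' p') + g q' p' * (f q p - f q' p')) by ring.
    eapply Rle_trans; [apply Rabs_triang|]. rewrite !Rabs_mult.
    set (r := Rpower (dist2 q p q' p') alpha).
    assert (0 < r) by apply Rpower_gt0.
    assert (Rabs (f q p) * Rabs (g q p - g q' p') <= s1 * (h2 * r))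
      by (apply Rmult_le_compat; auto using Rabs_pos).
    assert (Rabs (g q' p') * Rabs (f q p - f q' p') <= s2 * (h1 * r))
      by (apply Rmult_le_compat; auto using Rabs_pos).
    nra.
Qed.

Lemma hnorm_add_le f g x y : in_holder alpha p0 f -> in_holder alpha p0 g ->
  hnorm alpha p0 f <= x -> hnorm alpha p0 g <= y -> hnorm alpha p0 (fadd f g) <= x + y.
Proof. intros Hf Hg Hx Hy. pose proof (hnorm_add f g Hf Hg). lra. Qed.

Lemma hnorm_mul_le f g x y : in_holder alpha p0 f -> in_holder alpha p0 g ->
  hnorm alpha p0 f <= x -> hnorm alpha p0 g <= y -> hnorm alpha p0 (fmul f g) <= x * y.
Proof.
  intros Hf Hg Hx Hy. eapply Rle_trans; [apply hnorm_mul; assumption|].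
  apply Rmult_le_compat; auto using hnorm_ge0.
Qed.

End HolderNorm.

Lemma dqS_inv_fun p0 (u : R -> R -> R) : (forall q p, in_strip p0 p -> u q p <> 0) ->
  (forall q p, in_strip p0 p -> ex_derive (fun t => u t p) q) ->
  forall m q p, in_strip p0 p ->
  dq (S m) (inv_fun u) q p = - dq m (prod3 (inv_fun u) (inv_fun u) (dq 1 u)) q p.
Proof.
  intros Hu0 Hd m q p Hp. rewrite <- dq_comp.
  rewrite (dq_ext p0 _ (fun q p => - prod3 (inv_fun u) (inv_fun u) (dq 1 u) q p)) by
    first [exact Hp | intros; apply dq1_inv_fun; auto].
  apply (Derive_n_opp (fun t => prod3 (inv_fun u) (inv_fun u) (dq 1 u) t p)).
Qed.

Lemma is_derive_Rmult (f g : R -> R) x a b : is_derive f x a -> is_derive g x b ->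
  is_derive (fun t => f t * g t) x (a * g x + f x * b).
Proof. intros. apply (is_derive_mult f g); auto. intros; apply Rmult_comm. Qed.

Lemma is_derive_Ropp (f : R -> R) x a : is_derive f x a -> is_derive (fun t => - f t) x (- a).
Proof. apply (is_derive_opp f). Qed.

Lemma is_derive_Rplus (f g : R -> R) x a b : is_derive f x a -> is_derive g x b ->
  is_derive (fun t => f t + g t) x (a + b).
Proof. apply (is_derive_plus f g). Qed.

Lemma is_derive_Rconst (k x : R) : is_derive (fun _ => k) x 0.
Proof. apply (is_derive_const (K := R_AbsRing) (V := R_NormedModule)). Qed.

Lemma is_derive_eq_val (f : R -> R) (x a b : R) : is_derive f x a -> a = b -> is_derive f x b.
Proof. intros H <-. exact H. Qed.

Lemma Derive3_reciprocal (W U1 U2 U3 : R -> R) :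
  (forall t, ex_derive W t) -> (forall t, ex_derive (Derive W) t) ->
  (forall t, is_derive U1 t (U2 t)) -> (forall t, is_derive U2 t (U3 t)) ->
  (forall t, Derive W t = - (W t * W t * U1 t)) ->
  forall t, Derive (Derive (Derive W)) t =
    - (2 * (Derive W t * Derive W t + W t * Derive (Derive W) t) * U1 t
       + 4 * (W t * Derive W t) * U2 t + W t * W t * U3 t).
Proof.
  intros DW DW1 D1 D2 E.
  assert (IW : forall t, is_derive W t (Derive W t)) by (intros; apply Derive_correct; auto).
  assert (IW1 : forall t, is_derive (Derive W) t (Derive (Derive W) t))
    by (intros; apply Derive_correct; auto).
  assert (E2 : forall t, Derive (Derive W) t = - (2 * W t * Derive W t * U1 t + W t * W t * U2 t)).
  { intros t. apply is_derive_unique.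
    apply (is_derive_ext (fun t => - (W t * W t * U1 t))); [intros; symmetry; apply E|].
    eapply is_derive_eq_val.
    - apply is_derive_Ropp.
      apply is_derive_Rmult; [apply is_derive_Rmult|]; [apply IW|apply IW|apply D1].
    - cbv beta; ring. }
  intros t. apply is_derive_unique.
  apply (is_derive_ext (fun t => - (2 * W t * Derive W t * U1 t + W t * W t * U2 t)));
    [intros; symmetry; apply E2|].
  eapply is_derive_eq_val.
  - apply is_derive_Ropp, is_derive_Rplus.
    + apply is_derive_Rmult; [apply is_derive_Rmult; [apply is_derive_Rmult|]|];
        [apply is_derive_Rconst|apply IW|apply IW1|apply D1].
    + apply is_derive_Rmult; [apply is_derive_Rmult|]; [apply IW|apply IW|apply D2].
  - cbv beta; ring.
Qed.

Definition product_estimate (alpha p0 C1 : R) : Prop :=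
  forall (N' : nat) (L : R) (u1 u2 u3 : R -> R -> R),
    (3 <= N')%nat -> 1 <= L ->
    qCN_alpha alpha p0 N' u1 -> qCN_alpha alpha p0 N' u2 -> qCN_alpha alpha p0 N' u3 ->
    (forall n, (2 <= n <= N')%nat ->
       hnorm alpha p0 (dq n u1) <= L ^ (n - 1) * INR (fact (n - 2)) /\
       hnorm alpha p0 (dq n u2) <= L ^ (n - 1) * INR (fact (n - 2)) /\
       hnorm alpha p0 (dq n u3) <= L ^ (n - 1) * INR (fact (n - 2))) ->
    forall n, (2 <= n <= N')%nat ->
      hnorm alpha p0 (dq n (prod3 u1 u2 u3)) <=
        C1 * (1 + (hnorm alpha p0 (dq 0 u1) + hnorm alpha p0 (dq 1 u1))
                + (hnorm alpha p0 (dq 0 u2) + hnorm alpha p0 (dq 1 u2))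
                + (hnorm alpha p0 (dq 0 u3) + hnorm alpha p0 (dq 1 u3))) ^ 6
           * L ^ (n - 1) * INR (fact (n - 2)).

Ltac solve_in_holder :=
  repeat first [ apply in_holder_add | apply in_holder_mul; [assumption|..]
               | apply in_holder_cst | assumption ].

Ltac bound_hnorm :=
  lazymatch goal with
  | |- hnorm _ _ (fadd _ _) <= _ =>
      eapply hnorm_add_le; [assumption|solve_in_holder|solve_in_holder|bound_hnorm|bound_hnorm]
  | |- hnorm _ _ (fmul _ _) <= _ =>
      eapply hnorm_mul_le; [assumption|solve_in_holder|solve_in_holder|bound_hnorm|bound_hnorm]
  | |- hnorm _ _ (fcst _) <= _ => apply hnorm_cst; assumption
  | |- _ => apply Rle_refl
  end.

Section ReciprocalDerivatives.
Variables (alpha p0 : R) (N : nat) (u : R -> R -> R).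
Hypotheses (Hp0 : p0 <= 0) (HN : (3 <= N)%nat) (Hu : qCN_alpha alpha p0 N u)
  (Hw : qCN_alpha alpha p0 N (inv_fun u)) (Hu0 : forall q p, in_strip p0 p -> u q p <> 0).

Local Notation w := (inv_fun u).
Local Notation hn f := (hnorm alpha p0 f).

Lemma ex_derive_dq_u k q p : (k < N)%nat -> in_strip p0 p -> ex_derive (fun t => dq k u t p) q.
Proof. intros Hk Hp. exact (proj1 (proj2 Hu) k Hk q p Hp). Qed.

Lemma hnorm_dq3_inv_fun :
  hn (dq 3 w) <= 2 * (hn (dq 1 w) * hn (dq 1 w) + hn (dq 0 w) * hn (dq 2 w)) * hn (dq 1 u)
                 + 4 * (hn (dq 0 w) * hn (dq 1 w)) * hn (dq 2 u)
                 + hn (dq 0 w) * hn (dq 0 w) * hn (dq 3 u).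
Proof.
  set (T := fadd (fadd (fmul (fmul (fcst 2) (fadd (fmul (dq 1 w) (dq 1 w)) (fmul (dq 0 w) (dq 2 w))))
                             (dq 1 u))
                       (fmul (fmul (fcst 4) (fmul (dq 0 w) (dq 1 w))) (dq 2 u)))
                 (fmul (fmul (dq 0 w) (dq 0 w)) (dq 3 u))).
  assert (E3 : forall q p, in_strip p0 p -> dq 3 w q p = - T q p).
  { intros q p Hp.
    pose proof (fun k Hk t => proj1 (proj2 Hw) k Hk t p Hp) as Dw.
    change (dq 3 w q p) with (Derive (Derive (Derive (fun t => w t p))) q).
    rewrite (Derive3_reciprocal _ (fun t => dq 1 u t p) (fun t => dq 2 u t p) (fun t => dq 3 u t p)).
    - unfold T, fmul, fadd, fcst. reflexivity.
    - apply (Dw 0%nat); lia.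
    - apply (Dw 1%nat); lia.
    - intros t. apply Derive_correct, ex_derive_dq_u; [lia|exact Hp].
    - intros t. apply Derive_correct, ex_derive_dq_u; [lia|exact Hp].
    - intros t. apply dq1_inv_fun; [apply Hu0, Hp|apply (ex_derive_dq_u 0); [lia|exact Hp]]. }
  rewrite (hnorm_ext _ _ _ _ E3), hnorm_opp.
  pose proof (fun k Hk => proj2 (proj2 Hw) k Hk) as Hw_hol.
  pose proof (fun k Hk => proj2 (proj2 Hu) k Hk) as Hu_hol.
  pose proof (Hw_hol 0%nat ltac:(lia)). pose proof (Hw_hol 1%nat ltac:(lia)).
  pose proof (Hw_hol 2%nat ltac:(lia)). pose proof (Hu_hol 1%nat ltac:(lia)).
  pose proof (Hu_hol 2%nat ltac:(lia)). pose proof (Hu_hol 3%nat ltac:(lia)).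
  eapply Rle_trans; [unfold T; bound_hnorm|].
  rewrite (Rabs_pos_eq 2), (Rabs_pos_eq 4) by lra. apply Rle_refl.
Qed.

Lemma hnorm_dq_inv_fun_step C1 L n : product_estimate alpha p0 C1 -> 1 <= L ->
  (4 <= n <= N)%nat ->
  (forall k, (2 <= k < n)%nat -> hn (dq k w) <= L ^ (k - 1) * INR (fact (k - 2))) ->
  (forall k, (3 <= k <= n)%nat -> hn (dq k u) <= L ^ (k - 2) * INR (fact (k - 3))) ->
  hn (dq n w) <=
    C1 * (1 + ((2 * hn (dq 0 w) + hn (dq 1 u)) + (2 * hn (dq 1 w) + hn (dq 2 u)))) ^ 6
       * L ^ (n - 2) * INR (fact (n - 3)).
Proof.
  intros Hprod HL Hn Hw_bd Hu_bd.
  destruct n as [|m]; [lia|].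
  assert (Hud : forall q p, in_strip p0 p -> ex_derive (fun t => u t p) q)
    by (intros q p; apply (ex_derive_dq_u 0); lia).
  rewrite (hnorm_ext _ _ _ _ (dqS_inv_fun p0 u Hu0 Hud m)), hnorm_opp.
  assert (Hu1 : qCN_alpha alpha p0 m (dq 1 u)).
  { destruct N as [|N1]; [lia|].
    apply (qCN_le _ _ m N1); [lia|]. exact (proj2 (qCN_succ_inv _ _ _ _ Hu)). }
  assert (Hwm : qCN_alpha alpha p0 m w) by (apply (qCN_le _ _ m N); [lia|exact Hw]).
  assert (Hu1_bd : forall k, (2 <= k <= m)%nat -> hn (dq k (dq 1 u)) <= L ^ (k - 1) * INR (fact (k - 2))).
  { intros k Hk. rewrite (hnorm_ext _ _ _ (dq (S k) u)) by (intros; apply dq_comp).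
    exact (Hu_bd (S k) ltac:(lia)). }
  assert (HP := Hprod m L w w (dq 1 u) ltac:(lia) HL Hwm Hwm Hu1
    (fun k Hk => conj (Hw_bd k ltac:(lia)) (conj (Hw_bd k ltac:(lia)) (Hu1_bd k Hk))) m ltac:(lia)).
  change (hn (dq 0 (dq 1 u))) with (hn (dq 1 u)) in HP.
  change (hn (dq 1 (dq 1 u))) with (hn (dq 2 u)) in HP.
  replace (1 + ((2 * hn (dq 0 w) + hn (dq 1 u)) + (2 * hn (dq 1 w) + hn (dq 2 u))))
    with (1 + (hn (dq 0 w) + hn (dq 1 w)) + (hn (dq 0 w) + hn (dq 1 w)) + (hn (dq 1 u) + hn (dq 2 u)))
    by ring.
  exact HP.
Qed.

End ReciprocalDerivatives.

Lemma Rpower_sub_three_halves L n : 1 <= L -> (2 <= n)%nat ->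
  Rpower L (INR n - 3 / 2) = L ^ (n - 2) * sqrt L.
Proof.
  intros HL Hn. replace (INR n - 3 / 2) with (INR (n - 2) + / 2).
  - rewrite Rpower_plus, Rpower_pow, Rpower_sqrt by lra. reflexivity.
  - rewrite minus_INR by lia. simpl. lra.
Qed.

Lemma sqrt_bounds h K L : 0 <= h -> 1 <= K -> h ^ 2 + K ^ 2 <= L ->
  (1 <= sqrt L <= L) /\ h <= sqrt L /\ K <= sqrt L.
Proof.
  intros Hh HK HL.
  assert (Hle : forall x, 0 <= x -> x ^ 2 <= L -> x <= sqrt L).
  { intros x Hx H. rewrite <- (sqrt_pow2 x Hx). apply sqrt_le_1_alt, H. }
  pose proof (pow2_ge_0 h). pose proof (pow2_ge_0 K).
  assert (HKs : K <= sqrt L) by (apply Hle; lra).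
  assert (HL0 : 0 <= L) by lra.
  pose proof (sqrt_sqrt L HL0).
  repeat split; [lra|nra|apply Hle; lra|exact HKs].
Qed.

Lemma third_order_arith a b h d e t K L :
  0 <= a -> 0 <= b -> 0 <= h -> 0 <= d -> 0 <= e -> 0 <= t ->
  (1 + ((2 * a + d) + (2 * b + e))) ^ 6 <= K -> K <= sqrt L -> h <= sqrt L -> 1 <= sqrt L <= L ->
  t <= L ->
  2 * (b * b + a * h) * d + 4 * (a * b) * e + a * a * t <= L * sqrt L.
Proof.
  intros Ha Hb Hh0 Hd He Ht0 HK HKs Hh [Hs1 HsL] Ht.
  set (S := (2 * a + d) + (2 * b + e)) in HK.
  set (s := sqrt L) in *.
  assert (Hss : s * s = L) by (apply sqrt_sqrt; lra).
  assert (aS : a <= S) by (unfold S; lra). assert (bS : b <= S) by (unfold S; lra).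
  assert (dS : d <= S) by (unfold S; lra). assert (eS : e <= S) by (unfold S; lra).
  assert (T1 : b * b * d <= S * S * S) by (apply Rmult_le_compat; try apply Rmult_le_compat; nra).
  assert (T2 : a * h * d <= S * s * S) by (apply Rmult_le_compat; try apply Rmult_le_compat; nra).
  assert (T3 : a * b * e <= S * S * S) by (apply Rmult_le_compat; try apply Rmult_le_compat; nra).
  assert (T4 : a * a * t <= S * S * L) by (apply Rmult_le_compat; try apply Rmult_le_compat; nra).
  assert (HS : 0 <= S) by lra.
  assert (Hpoly : 3 * S ^ 2 + 6 * S ^ 3 <= (1 + S) ^ 6).
  { replace ((1 + S) ^ 6) with
      (1 + 6 * S + 15 * S ^ 2 + 20 * S ^ 3 + 15 * S ^ 4 + 6 * S ^ 5 + S ^ 6) by ring.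
    assert (0 <= S ^ 4) by (apply pow_le; lra). assert (0 <= S ^ 5) by (apply pow_le; lra).
    assert (0 <= S ^ 6) by (apply pow_le; lra). nra. }
  assert (0 <= S * S * S) by (repeat apply Rmult_le_pos; lra).
  assert (S * S * s <= S * S * (s * s)) by (apply Rmult_le_compat_l; nra).
  assert (S * S * S <= S * S * S * (s * s)) by (rewrite <- (Rmult_1_r (S * S * S)) at 1;
    apply Rmult_le_compat_l; nra).
  assert (Hsum : 2 * (b * b + a * h) * d + 4 * (a * b) * e + a * a * t
                 <= (3 * S ^ 2 + 6 * S ^ 3) * (s * s)) by (rewrite <- Hss in T4; nra).
  assert ((3 * S ^ 2 + 6 * S ^ 3) * (s * s) <= K * (s * s)) by (apply Rmult_le_compat_r; nra).
  assert (K * (s * s) <= s * (s * s)) by (apply Rmult_le_compat_r; nra).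
  rewrite <- Hss. nra.
Qed.

Lemma pow_sqrt_le_pow L k : 1 <= sqrt L <= L -> (2 <= k)%nat ->
  L ^ (k - 2) * sqrt L * INR (fact (k - 2)) <= L ^ (k - 1) * INR (fact (k - 2)).
Proof.
  intros Hs Hk. apply Rmult_le_compat_r; [apply pos_INR|].
  replace (k - 1)%nat with (S (k - 2)) by lia. simpl. rewrite Rmult_comm.
  apply Rmult_le_compat_r; [apply pow_le|]; lra.
Qed.

Lemma absorb_constant K L n : K <= sqrt L -> 1 <= L -> (3 <= n)%nat ->
  K * L ^ (n - 2) * INR (fact (n - 3)) <= L ^ (n - 2) * sqrt L * INR (fact (n - 2)).
Proof.
  intros HK HL Hn.
  assert (0 <= L ^ (n - 2)) by (apply pow_le; lra).
  assert (INR (fact (n - 3)) <= INR (fact (n - 2))) by (apply le_INR, fact_le; lia).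
  pose proof (pos_INR (fact (n - 3))). pose proof (sqrt_pos L).
  apply Rle_trans with (L ^ (n - 2) * sqrt L * INR (fact (n - 3))).
  - rewrite (Rmult_comm K). apply Rmult_le_compat_r; [lra|]. apply Rmult_le_compat_l; lra.
  - apply Rmult_le_compat_l; [apply Rmult_le_pos|]; lra.
Qed.

Theorem lemma2p3 (p0 alpha C1 : R) (N : nat) (u : R -> R -> R) :
  p0 < 0 -> 0 < alpha < 1 -> 1 < C1 ->
  (forall (N' : nat) (L : R) (u1 u2 u3 : R -> R -> R),
      (3 <= N')%nat -> 1 <= L ->
      qCN_alpha alpha p0 N' u1 -> qCN_alpha alpha p0 N' u2 -> qCN_alpha alpha p0 N' u3 ->
      (forall n, (2 <= n <= N')%nat ->
         hnorm alpha p0 (dq n u1) <= L ^ (n - 1) * INR (fact (n - 2)) /\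
         hnorm alpha p0 (dq n u2) <= L ^ (n - 1) * INR (fact (n - 2)) /\
         hnorm alpha p0 (dq n u3) <= L ^ (n - 1) * INR (fact (n - 2))) ->
      forall n, (2 <= n <= N')%nat ->
        hnorm alpha p0 (dq n (prod3 u1 u2 u3)) <=
          C1 * (1 + (hnorm alpha p0 (dq 0 u1) + hnorm alpha p0 (dq 1 u1))
                  + (hnorm alpha p0 (dq 0 u2) + hnorm alpha p0 (dq 1 u2))
                  + (hnorm alpha p0 (dq 0 u3) + hnorm alpha p0 (dq 1 u3))) ^ 6
             * L ^ (n - 1) * INR (fact (n - 2))) ->
  (3 <= N)%nat ->
  qCN_alpha alpha p0 N u ->
  (exists c, 0 < c /\ forall q p, p0 < p < 0 -> c <= u q p) ->
  forall L : R,
    L >= hnorm alpha p0 (dq 2 (inv_fun u)) ^ 2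
         + C1 ^ 2 * (1 + ((2 * hnorm alpha p0 (dq 0 (inv_fun u)) + hnorm alpha p0 (dq 1 u))
                         + (2 * hnorm alpha p0 (dq 1 (inv_fun u)) + hnorm alpha p0 (dq 2 u)))) ^ 12 ->
    (forall n, (3 <= n <= N)%nat ->
       hnorm alpha p0 (dq n u) <= L ^ (n - 2) * INR (fact (n - 3))) ->
    forall n, (2 <= n <= N)%nat ->
      hnorm alpha p0 (dq n (inv_fun u)) <= Rpower L (INR n - 3 / 2) * INR (fact (n - 2)).
Proof.
  intros Hp0 Ha HC1 Hprod HN Hu [c [Hc Hcu]] L HL Hun.
  assert (Hp0le : p0 <= 0) by lra.
  assert (Hpos := in_holder_lower_bound_closure _ _ _ _ Hp0 (proj1 Ha)
                    (qCN_holder _ _ _ _ Hu) Hcu).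
  assert (Hu0 : forall q p, in_strip p0 p -> u q p <> 0)
    by (intros q p Hp; specialize (Hpos q p Hp); lra).
  assert (Hw := qCN_inv _ _ _ _ _ Hp0le Hc Hpos Hu).
  set (S := (2 * hnorm alpha p0 (dq 0 (inv_fun u)) + hnorm alpha p0 (dq 1 u))
          + (2 * hnorm alpha p0 (dq 1 (inv_fun u)) + hnorm alpha p0 (dq 2 u))) in HL.
  pose proof (hnorm_ge0 alpha p0 Hp0le) as Hge.
  assert (HS : 0 <= S).
  { pose proof (Hge (dq 0 (inv_fun u))). pose proof (Hge (dq 1 (inv_fun u))).
    pose proof (Hge (dq 1 u)). pose proof (Hge (dq 2 u)). unfold S; lra. }
  assert (HS6 : 1 <= (1 + S) ^ 6) by (apply pow_R1_Rle; lra).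
  assert (Hpow : (1 + S) ^ 6 <= C1 * (1 + S) ^ 6) by nra.
  destruct (sqrt_bounds (hnorm alpha p0 (dq 2 (inv_fun u))) (C1 * (1 + S) ^ 6) L
              (Hge _) ltac:(nra) ltac:(lra)) as [Hs [Hh HK]].
  intros n Hn. rewrite Rpower_sub_three_halves by (lra || lia).
  induction n as [n IH] using lt_wf_ind.
  destruct (Nat.lt_ge_cases n 4) as [Hn3|Hn4].
  - destruct (Nat.eq_dec n 2) as [->|Hn2]; [simpl; lra|]. replace n with 3%nat by lia.
    assert (Hu3 : hnorm alpha p0 (dq 3 u) <= L)
      by (pose proof (Hun 3%nat ltac:(lia)); simpl in *; lra).
    eapply Rle_trans; [apply (hnorm_dq3_inv_fun alpha p0 N u); assumption|].
    replace (L ^ (3 - 2) * sqrt L * INR (fact (3 - 2))) with (L * sqrt L) by (simpl; ring).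
    apply (third_order_arith _ _ _ _ _ _ (C1 * (1 + S) ^ 6)); auto.
  - eapply Rle_trans; [apply (hnorm_dq_inv_fun_step alpha p0 N u HN Hu Hw Hu0 C1 L n Hprod)|].
    + lra.
    + lia.
    + intros k Hk. eapply Rle_trans; [apply IH; lia|apply pow_sqrt_le_pow; [exact Hs|lia]].
    + intros k Hk. apply Hun. lia.
    + apply absorb_constant; [exact HK|lra|lia].
Qed.
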